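(* In the network system of the context, fix $i$ and suppose $v_i$ is measurable and the $i$th subcontroller is $u_i=\hat K_iR_i\begin{bmatrix} y_i\\ v_i\end{bmatrix}$ with $R_i=\begin{bmatrix} I&-G_{y_iv_i}\end{bmatrix}$ and $\hat K_i$ a stabilizing controller for $G_{y_iu_i}$, while the other subcontrollers $u_j=K_jy_j$ ($j\ne i$) are arbitrary proper real rational transfer matrices. Then for every $j\neq i$ the closed-loop transfer matrix from $d_j$ to $u_i$ is zero; i.e. $u_i=0$ for every disturbance $d_j$ with $j\ne i$ (when $d_i=0$).
   Context: For $k=1,\dots,N$, subsystem $G_k$ is a proper real rational transfer matrix with inputs $(v_k,d_k,u_k)$ (interaction, disturbance, control) and outputs $(w_k,z_k,y_k)$ (interaction, evaluation, measurement), $G_{a_kb_k}$ denoting the block from $b_k$ to $a_k$. Stacked signals $\boldsymbol v=\mathrm{col}(v_1,\dots,v_N)$ etc.; the interaction is $\boldsymbol v=\boldsymbol L\boldsymbol w$ with $\boldsymbol L$ a proper real rational transfer matrix. All feedback systems are assumed well-posed. $\hat K_i$ is a stabilizing controller for $G_{y_iu_i}$ if the positive feedback loop $y_i=G_{y_iu_i}u_i$, $u_i=\hat K_iy_i$ is internally stable. *)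

From HB Require Import structures.
From mathcomp Require Import all_boot all_order all_algebra.
Set Implicit Arguments. Unset Strict Implicit. Unset Printing Implicit Defensive.
Import Order.TTheory GRing.Theory Num.Theory.
Local Open Scope ring_scope.

(* Transfer functions: rational functions in s with coefficients in a numeric
   closed field C (e.g. algC); "real" rational = representable with real coeffs. *)
Section TF.
Variable C : numClosedFieldType.

Definition tfield := {fraction {poly C}}.

Definition tf (p : {poly C}) : tfield := FracField.tofrac p.

Definition real_poly (p : {poly C}) : Prop := forall k, p`_k \is Num.real.

Definition hurwitz (q : {poly C}) : Prop :=
  q != 0 /\ forall z, root q z -> 'Re z < 0.

Definition prr (f : tfield) : Prop :=
  exists p q : {poly C}, [/\ real_poly p, real_poly q, q != 0,
    (size p <= size q)%N & f = tf p / tf q].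

Definition stable (f : tfield) : Prop :=
  exists p q : {poly C}, [/\ real_poly p, real_poly q, hurwitz q,
    (size p <= size q)%N & f = tf p / tf q].

Definition prr_mx m n (A : 'M[tfield]_(m, n)) : Prop := forall i j, prr (A i j).
Definition stable_mx m n (A : 'M[tfield]_(m, n)) : Prop := forall i j, stable (A i j).

(* Khat is a stabilizing controller for G (positive feedback y = G u, u = Khat y):
   the loop y = G u + r1, u = Khat y + r2 is well-posed (the matrix below is
   invertible) and the closed-loop map (r1,r2) -> (y,u) is stable. *)
Definition stabilizing ny nu (G : 'M[tfield]_(ny, nu)) (Khat : 'M[tfield]_(nu, ny)) : Prop :=
  let M : 'M[tfield]_(ny + nu) := block_mx 1%:M (- G) (- Khat) 1%:M in
  M \in unitmx /\ stable_mx (invmx M).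

Record subsys := Subsys {
  nv : nat; nd : nat; nu : nat; nw : nat; nz : nat; ny : nat;
  Gwv : 'M[tfield]_(nw, nv); Gwd : 'M[tfield]_(nw, nd); Gwu : 'M[tfield]_(nw, nu);
  Gzv : 'M[tfield]_(nz, nv); Gzd : 'M[tfield]_(nz, nd); Gzu : 'M[tfield]_(nz, nu);
  Gyv : 'M[tfield]_(ny, nv); Gyd : 'M[tfield]_(ny, nd); Gyu : 'M[tfield]_(ny, nu) }.

Definition subsys_prr (S : subsys) : Prop :=
  [/\ prr_mx (Gwv S), prr_mx (Gwd S) & prr_mx (Gwu S)] /\
  [/\ prr_mx (Gzv S), prr_mx (Gzd S) & prr_mx (Gzu S)] /\
  [/\ prr_mx (Gyv S), prr_mx (Gyd S) & prr_mx (Gyu S)].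

(* Closed-loop equations of the network: subsystems, interaction v = L w
   (L given blockwise, L k l : v_k <- w_l), subcontroller i is
   u_i = Khat R_i [y_i; v_i] with R_i = [I, -G_{y_i v_i}], others u_k = K_k y_k. *)
Definition closed_loop N (G : 'I_N -> subsys)
  (L : forall k l : 'I_N, 'M[tfield]_(nv (G k), nw (G l)))
  (i : 'I_N) (Khat : 'M[tfield]_(nu (G i), ny (G i)))
  (K : forall k : 'I_N, 'M[tfield]_(nu (G k), ny (G k)))
  (d : forall k, 'cV[tfield]_(nd (G k)))
  (w : forall k, 'cV[tfield]_(nw (G k))) (z : forall k, 'cV[tfield]_(nz (G k)))
  (y : forall k, 'cV[tfield]_(ny (G k))) (v : forall k, 'cV[tfield]_(nv (G k)))
  (u : forall k, 'cV[tfield]_(nu (G k))) : Prop :=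
  [/\ forall k, w k = Gwv (G k) *m v k + Gwd (G k) *m d k + Gwu (G k) *m u k,
      forall k, z k = Gzv (G k) *m v k + Gzd (G k) *m d k + Gzu (G k) *m u k &
      forall k, y k = Gyv (G k) *m v k + Gyd (G k) *m d k + Gyu (G k) *m u k]
  /\ [/\ forall k, v k = \sum_l L k l *m w l,
      u i = Khat *m (row_mx 1%:M (- Gyv (G i)) *m col_mx (y i) (v i))
    & forall k, k != i -> u k = K k *m y k].

Definition well_posed N (G : 'I_N -> subsys)
  (L : forall k l : 'I_N, 'M[tfield]_(nv (G k), nw (G l)))
  (i : 'I_N) (Khat : 'M[tfield]_(nu (G i), ny (G i)))
  (K : forall k : 'I_N, 'M[tfield]_(nu (G k), ny (G k))) : Prop :=
  forall d : forall k, 'cV[tfield]_(nd (G k)),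
    (exists w z y v u, closed_loop L Khat K d w z y v u) /\
    (forall w z y v u w' z' y' v' u',
        closed_loop L Khat K d w z y v u -> closed_loop L Khat K d w' z' y' v' u' ->
        [/\ w = w', z = z', y = y', v = v' & u = u']).

End TF.

From HB Require Import structures.
From mathcomp Require Import all_boot all_order all_algebra.
Set Implicit Arguments. Unset Strict Implicit. Unset Printing Implicit Defensive.
Import Order.TTheory GRing.Theory Num.Theory.
Local Open Scope ring_scope.

(* Since d_i = 0, the compensated measurement R_i [y_i; v_i] = y_i - G_{y_i v_i} v_i
   equals G_{y_i u_i} u_i, so u_i is a fixed point of the local loop
   u_i = Khat G_{y_i u_i} u_i.  Then [G u_i; u_i] lies in the kernel of the loop
   matrix [[I, -G]; [-Khat, I]], which is invertible because Khat stabilizes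
   G_{y_i u_i}; hence u_i = 0, whatever the disturbances d_j entering elsewhere. *)

Lemma mul_row1N_col (R : pzRingType) m n p (A : 'M[R]_(m, n))
    (y : 'M[R]_(m, p)) (v : 'M[R]_(n, p)) :
  row_mx 1%:M (- A) *m col_mx y v = y - A *m v.
Proof. by rewrite mul_row_col mul1mx mulNmx. Qed.

Lemma feedback_fixpoint_eq0 (R : comUnitRingType) m n p
    (G : 'M[R]_(m, n)) (K : 'M[R]_(n, m)) (x : 'M[R]_(n, p)) :
  block_mx 1%:M (- G) (- K) 1%:M \in unitmx ->
  x = K *m (G *m x) -> x = 0.
Proof.
set M := block_mx _ _ _ _ => unitM fix_x.
have kerM : M *m col_mx (G *m x) x = 0.
  by rewrite mul_block_col !mul1mx !mulNmx subrr -fix_x addNr col_mx0.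
have : col_mx (G *m x) x = 0 by rewrite -(mulKmx unitM (col_mx _ x)) kerM mulmx0.
by move/(congr1 dsubmx); rewrite col_mxKd linear0.
Qed.

Theorem proposition5 (C : numClosedFieldType) (N : nat) (G : 'I_N -> subsys C)
  (L : forall k l : 'I_N, 'M[tfield C]_(nv (G k), nw (G l)))
  (i : 'I_N) (Khat : 'M[tfield C]_(nu (G i), ny (G i)))
  (K : forall k : 'I_N, 'M[tfield C]_(nu (G k), ny (G k))) :
  (forall k, subsys_prr (G k)) ->
  (forall k l, prr_mx (L k l)) ->
  prr_mx Khat ->
  stabilizing (Gyu (G i)) Khat ->
  (forall k, k != i -> prr_mx (K k)) ->
  well_posed L Khat K ->
  forall j : 'I_N, j != i ->
  forall (d : forall k, 'cV[tfield C]_(nd (G k))) w z y v u,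
    (forall k, k != j -> d k = 0) ->
    closed_loop L Khat K d w z y v u ->
    u i = 0.
Proof.
move=> _ _ _ [unitM _] _ _ j neq_ji d w z y v u d_eq0 [[_ _ eq_y] [_ eq_ui _]].
have d_i : d i = 0 by apply: d_eq0; rewrite eq_sym.
apply: (feedback_fixpoint_eq0 unitM).
rewrite {1}eq_ui mul_row1N_col eq_y d_i mulmx0 addr0.
by rewrite addrAC subrr add0r.
Qed.
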